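(* Let $X\neq\{0\}$ be a Hausdorff topological vector space over $\mathbb{K}=\mathbb{R}$ or $\mathbb{C}$ and let $A$ be a nonvoid subset of $X$. If $(x_n)_{n=1}^\infty$ is an $\ell_\infty$-independent sequence of elements of $X$ and $A$ is $[(x_n)_{n=1}^\infty,\mathcal{S}]$-lineable for some infinite dimensional subspace $\mathcal{S}$ of $\ell_\infty$, then $A$ is lineable.
   Context: $\ell_\infty$ is the space of bounded scalar sequences, a subspace of $\mathbb{K}^{\mathbb{N}}$. A sequence $(x_n)_{n=1}^\infty$ in a topological vector space $X$ is $\ell_\infty$-independent if whenever $(c_n)_{n=1}^\infty\in\ell_\infty$ and $\sum_{n=1}^\infty c_nx_n=0$ (convergent series in $X$), then $c_n=0$ for all $n$. For a subspace $\mathcal{S}$ of $\mathbb{K}^{\mathbb{N}}$, a subset $A\subset X$ is $[(x_n)_{n=1}^\infty,\mathcal{S}]$-lineable if for each $(c_n)_{n=1}^\infty\in\mathcal{S}$ the series $\sum_{n=1}^\infty c_nx_n$ converges in $X$ to a vector of $A\cup\{0\}$. A subset $A$ is lineable if $A\cup\{0\}$ contains an infinite dimensional vector subspace. *)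

From mathcomp Require Import all_boot all_algebra.
From mathcomp Require Import all_classical all_reals all_analysis.
From mathcomp Require Import complex.
Import numFieldNormedType.Exports.

Set Implicit Arguments.
Unset Strict Implicit.
Unset Printing Implicit Defensive.

Local Open Scope classical_set_scope.
Local Open Scope ring_scope.

(* The series sum_n c_n x_n converges in X to y
   (indices start at 0 instead of 1). *)
Definition series_to (K : numFieldType) (X : topologicalLmodType K)
  (c : nat -> K) (x : nat -> X) (y : X) : Prop :=
  series (fun n => c n *: x n) @ \oo --> y.

Definition linfty (K : numFieldType) : set (nat -> K) :=
  [set c | exists M : K, forall n, `|c n| <= M].

Definition linfty_independent (K : numFieldType) (X : topologicalLmodType K)
  (x : nat -> X) : Prop :=
  forall c : nat -> K, @linfty K c -> series_to c x 0 -> forall n, c n = 0.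

Definition is_subspace (K : numDomainType) (V : lmodType K) (M : set V) : Prop :=
  M 0 /\ (forall u v, M u -> M v -> M (u + v)) /\
  (forall (a : K) v, M v -> M (a *: v)).

Definition span_seq (K : numDomainType) (V : lmodType K) (s : seq V) : set V :=
  [set v | exists a : 'I_(size s) -> K, v = \sum_(i < size s) a i *: s`_i].

Definition infinite_dim (K : numDomainType) (V : lmodType K) (M : set V) : Prop :=
  forall s : seq V, (forall v, v \in s -> M v) -> ~ (M `<=` span_seq s).

Definition lineable (K : numFieldType) (X : topologicalLmodType K) (A : set X) : Prop :=
  exists M : set X, [/\ is_subspace M, infinite_dim M & M `<=` A `|` [set 0]].

Definition seq_lineable (K : numFieldType) (X : topologicalLmodType K)
  (A : set X) (x : nat -> X) (S : set (nat -> K)) : Prop :=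
  forall c, S c -> exists2 y, series_to c x y & (A `|` [set 0]) y.

Definition main_statement (K : numFieldType) : Prop :=
  forall (X : topologicalLmodType K), hausdorff_space X ->
  (exists v : X, v != 0) ->
  forall (A : set X), A !=set0 ->
  forall (x : nat -> X), linfty_independent x ->
  forall (S : set (nat -> K)),
    is_subspace S -> S `<=` @linfty K -> infinite_dim S ->
    seq_lineable A x S -> lineable A.

(** The summation map [c |-> \sum_n c n *: x n] is well defined on [S]
  (every series converges, and limits are unique in a Hausdorff space) and
  linear, and [l_infty]-independence of [(x n)] says exactly that its kernel
  on [S] is trivial. Its image is therefore a subspace of [A `|` [set 0]]
  isomorphic to [S], hence infinite dimensional. *)
From mathcomp Require Import all_boot all_algebra.
From mathcomp Require Import all_classical all_reals all_analysis.
From mathcomp Require Import complex.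
Import numFieldNormedType.Exports.
Import GRing.Theory Num.Theory.

Set Implicit Arguments.
Unset Strict Implicit.
Unset Printing Implicit Defensive.

Local Open Scope classical_set_scope.
Local Open Scope ring_scope.

Section LinearImage.
Variables (K : numDomainType) (V W : lmodType K) (S : set V) (f : V -> W).
Hypothesis S_subspace : is_subspace S.
Hypothesis fD : forall u v, S u -> S v -> f (u + v) = f u + f v.
Hypothesis fZ : forall (a : K) v, S v -> f (a *: v) = a *: f v.

Lemma subspace_image : is_subspace (f @` S).
Proof.
have [S0 [SD SZ]] := S_subspace.
split; last split.
- by exists 0 => //; rewrite -(scale0r 0) fZ // scale0r.
- by move=> _ _ [u Su <-] [v Sv <-]; exists (u + v); rewrite ?fD //; apply: SD.
- by move=> a _ [v Sv <-]; exists (a *: v); rewrite ?fZ //; apply: SZ.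
Qed.

Lemma image_lincomb n (a : 'I_n -> K) (t : 'I_n -> V) :
  (forall i, S (t i)) ->
  S (\sum_(i < n) a i *: t i) /\
  f (\sum_(i < n) a i *: t i) = \sum_(i < n) a i *: f (t i).
Proof.
have [S0 [SD SZ]] := S_subspace.
move=> St; apply: (big_ind2 (fun u w => S u /\ f u = w)).
- by split => //; rewrite -(scale0r 0) fZ // scale0r.
- by move=> u w u' w' [Su <-] [Su' <-]; split; [apply: SD | rewrite fD].
- by move=> i _; split; [apply: SZ | rewrite fZ].
Qed.

Lemma infinite_dim_image :
  (forall u, S u -> f u = 0 -> u = 0) -> infinite_dim S -> infinite_dim (f @` S).
Proof.
have [_ [SD SZ]] := S_subspace.
move=> f_ker S_inf s s_img s_span.
have f_inj u v : S u -> S v -> f u = f v -> u = v.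
  move=> Su Sv fuv; apply/subr0_eq/f_ker; first by rewrite -scaleN1r; apply/SD/SZ.
  by rewrite -scaleN1r fD ?fZ //; [rewrite fuv scaleN1r subrr | apply: SZ].
have s_pre i : exists2 v, S v & f v = s`_(i : 'I_(size s)).
  by case: (s_img _ (mem_nth 0 (ltn_ord i))) => v Sv fv; exists v.
have [t St ft] := fin_all_exists2 s_pre.
pose ts := [tuple t i | i < size s].
have ts_S v : v \in ts -> S v by move=> /tnthP [i ->]; rewrite tnth_mktuple.
apply: (S_inf ts ts_S) => c Sc.
have [a fc] := s_span (f c) (ex_intro2 _ _ c Sc erefl).
have [Sd fd] := @image_lincomb _ a t St.
rewrite /span_seq size_tuple; exists a.
have -> : \sum_(i < size s) a i *: ts`_i =
          \sum_(i < size s) a i *: t i.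
  by apply: eq_bigr => i _; rewrite -tnth_nth tnth_mktuple.
apply: f_inj => //; rewrite fc fd.
by apply: eq_bigr => i _; rewrite ft.
Qed.

End LinearImage.

Section SeriesSum.
Variables (K : numFieldType) (X : topologicalLmodType K) (x : nat -> X).

(* Junk value [0] when the series has no sum. *)
Definition series_sum (c : nat -> K) : X := xget 0 (series_to c x).

Lemma series_sumE c y : hausdorff_space X -> series_to c x y -> series_sum c = y.
Proof. by move=> hX cy; apply: (cvg_unique hX _ cy); apply: xgetPex; exists y. Qed.

Lemma series_toD c d y z :
  series_to c x y -> series_to d x z -> series_to (c + d) x (y + z).
Proof.
move=> cy dz; rewrite /series_to.
have -> : series (fun n => (c + d) n *: x n) =
          (fun n => series (fun n => c n *: x n) n + series (fun n => d n *: x n) n).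
  by apply/funext => n; rewrite /series /= -big_split; apply: eq_bigr => i _; rewrite scalerDl.
apply: (@continuous2_cvg _ _ _ _ _ _ _ _ (fun a b => a + b) _ _ _ cy dz).
exact: (@add_continuous X (y, z)).
Qed.

Lemma series_toZ (a : K) c y : series_to c x y -> series_to (a *: c) x (a *: y).
Proof.
move=> cy; rewrite /series_to.
have -> : series (fun n => (a *: c) n *: x n) =
          (fun n => a *: series (fun n => c n *: x n) n).
  by apply/funext => n; rewrite /series /= scaler_sumr; apply: eq_bigr => i _; rewrite scalerA.
apply: (@continuous2_cvg _ (K^o) X X _ _ _ _ (fun (b : K^o) (v : X) => b *: v) _ _ _
  (cvg_cst a) cy).
exact: (@scale_continuous K X (a, y)).
Qed.

End SeriesSum.

Lemma lineable_of_seq_lineable (K : numFieldType) : main_statement K.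
Proof.
move=> X hX _ A _ x x_ind S S_subspace S_linfty S_inf A_lin.
have sumP c : S c -> series_to c x (series_sum x c).
  by move=> Sc; have [y cy _] := A_lin c Sc; rewrite (series_sumE hX cy).
have sumD c d : S c -> S d -> series_sum x (c + d) = series_sum x c + series_sum x d.
  by move=> Sc Sd; apply/series_sumE/series_toD/sumP/Sd/sumP.
have sumZ a c : S c -> series_sum x (a *: c) = a *: series_sum x c.
  by move=> Sc; apply/series_sumE/series_toZ/sumP.
exists (series_sum x @` S); split.
- exact: subspace_image.
- apply: infinite_dim_image => // c Sc c0; apply/funext => n.
  by apply: (x_ind c (S_linfty c Sc)); rewrite -c0; apply: sumP.
- move=> _ [c Sc <-]; have [y cy Ay] := A_lin c Sc.
  by rewrite (series_sumE hX cy).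
Qed.

Theorem mainTheorem2 (R : realType) :
  main_statement R /\ main_statement R[i].
Proof. by split; apply: lineable_of_seq_lineable. Qed.
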